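(* Let $(\Delta,R)$ be a gentle quiver such that $f_{(\Delta,R)} = m'\cdot[0,3]+[p+m'+2,\,p]$ for some $m',p\in\mathbb N$, and let $m$ be the number of $3$-cycles in $\Delta$. Then \[ f_{(\Delta,R)} = m\cdot[0,3] + [\,|\Delta_0|+1-m,\; |\Delta_0|-1-2m\,]. \]
   Context: A quiver $\Delta$ has finite vertex set $\Delta_0$, arrow set $\Delta_1$, maps $s,t$. A path of length $n\ge1$ is $(\alpha_1,\dots,\alpha_n)$ with $s\alpha_i=t\alpha_{i+1}$. A $3$-cycle in $\Delta$ is a sequence $(\alpha_0,\alpha_1,\alpha_2)$ of arrows with $\alpha_0\ne\alpha_1\ne\alpha_2\ne\alpha_0$ such that $(\alpha_0,\alpha_1,\alpha_2,\alpha_0)$ is a path; 3-cycles differing by a cyclic permutation are identified. A gentle quiver is $(\Delta,R)$ with $\Delta$ connected, $R$ a set of paths of length 2, such that: (1) each vertex is start of at most two arrows and end of at most two arrows; (2) for each arrow $\alpha$ at most one $\beta$ with $s\beta=t\alpha$, $(\beta,\alpha)\notin R$ and at most one $\gamma$ with $t\gamma=s\alpha$, $(\alpha,\gamma)\notin R$; (3) for each $\alpha$ at most one $\beta$ with $(\beta,\alpha)\in R$ and at most one $\gamma$ with $(\alpha,\gamma)\in R$; (4) for some $n$ every path of length $n$ has a subpath in $R$. Invariant $f_{(\Delta,R)}:\mathbb N^2\to\mathbb N$: choose $\sigma,\tau:\Delta_1\to\{\pm1\}$ with distinct arrows of same start having opposite $\sigma$, distinct arrows of same end opposite $\tau$,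 and for $s\alpha=t\beta$: $(\alpha,\beta)\in R$ iff $\sigma\alpha=\tau\beta$; $\sigma\omega=\sigma\alpha_n,\tau\omega=\tau\alpha_1$. Permitted paths: no consecutive pair in $R$, plus trivial $1_{x,\varepsilon}$ ($s=t=x$, $\sigma=\varepsilon,\tau=-\varepsilon$); maximal if no arrow $\alpha$ with $s\alpha=t\omega,\sigma\alpha=-\tau\omega$ and no $\beta$ with $t\beta=s\omega,\tau\beta=-\sigma\omega$; set $\mathcal M$. Antipaths: all consecutive pairs in $R$, plus trivial $1'_{x,\varepsilon}$ ($\sigma=\tau=\varepsilon$); maximal if no $\alpha$ with $s\alpha=t\omega,\sigma\alpha=\tau\omega$ and no $\beta$ with $t\beta=s\omega,\tau\beta=\sigma\omega$; set $\mathcal N$. $\phi:\mathcal M\to\mathcal N$, $\omega\mapsto$ unique $\omega'$ with $t\omega'=t\omega,\tau\omega'=-\tau\omega$; $\psi:\mathcal N\to\mathcal M$, $\omega\mapsto$ unique $\omega'$ with $s\omega'=s\omega,\sigma\omega'=-\sigma\omega$; $\Phi=\phi\psi$; $\Phi$-orbit: $p=|\mathcal O|$, $q=$ total length. $\mathcal C$: arrows $\alpha$ with $(\alpha)$ not a subpath of a maximal antipath; $\Psi(\alpha)=$ unique $\beta\in\mathcal C$ with $t\beta=s\alpha,\tau\beta=\sigma\alpha$; $\Psi$-orbit: $p=0$, $q=|\mathcal O|$. $f(p,q)=$ number of orbits with these values. $[p,q]$ is the characteristic function of $\{(p,q)\}$; sums pointwise. *)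

From mathcomp Require Import all_boot.
Set Implicit Arguments. Unset Strict Implicit. Unset Printing Implicit Defensive.

Section Gentle.
Variables (V A : finType) (s t : A -> V) (R : rel A).

(* A path (a_1,...,a_n) is stored as its first arrow a_1 and the rest;
   consecutive arrows satisfy s a_i = t a_(i+1).  R a b means (a,b) in R. *)
Definition arrow_path (a : A) (r : seq A) := path (fun x y => s x == t y) a r.

Definition adj : rel V :=
  fun x y => [exists a, ((s a == x) && (t a == y)) || ((s a == y) && (t a == x))].

Definition connected_quiver := 0 < #|V| /\ forall x y, connect adj x y.

Definition gentle : Prop :=
  (forall a b, R a b -> s a = t b) /\
  [/\ connected_quiver,
      (forall x, #|[set a | s a == x]| <= 2 /\ #|[set a | t a == x]| <= 2),
      (forall a, #|[set b | (s b == t a) && ~~ R b a]| <= 1 /\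
                 #|[set c | (t c == s a) && ~~ R a c]| <= 1),
      (forall a, #|[set b | R b a]| <= 1 /\ #|[set c | R a c]| <= 1) &
      (exists n, forall a r, size r = n -> arrow_path a r ->
                    ~~ path (fun x y => ~~ R x y) a r)].

(* 3-cycles, identified up to cyclic permutation *)
Definition is3cycle (c : A * A * A) : bool :=
  let '(a0, a1, a2) := c in
  [&& a0 != a1, a1 != a2, a2 != a0, s a0 == t a1, s a1 == t a2 & s a2 == t a0].
Definition rot3 (c : A * A * A) : A * A * A := let '(a0, a1, a2) := c in (a1, a2, a0).
Definition rotclass (c : A * A * A) : {set A * A * A} := [set c; rot3 c; rot3 (rot3 c)].
Definition n3cycles : nat := #|[set rotclass c | c in [set c | is3cycle c]]|.

(* Signs: true = +1, false = -1. *)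
Variables (sigma tau : A -> bool).

Definition sign_ok : Prop :=
  [/\ (forall a b, a != b -> s a = s b -> sigma a != sigma b),
      (forall a b, a != b -> t a = t b -> tau a != tau b) &
      (forall a b, s a = t b -> R a b = (sigma a == tau b))].

Fixpoint allseq (n : nat) : seq (seq A) :=
  if n is n'.+1 then [::] :: [seq a :: w | a <- enum A, w <- allseq n'] else [:: [::]].

(* Generalized paths: trivial ones (x, eps), or nontrivial ones of length
   <= #|A| (first arrow, remaining arrows).  Maximal permitted paths and
   maximal antipaths of a gentle quiver have length <= #|A|. *)
Definition rest := seq_sub (allseq #|A|.-1).
Definition gp := ((V * bool) + (A * rest))%type.

Definition arrs (w : gp) : seq A :=
  match w with inl _ => [::] | inr (a, r) => a :: ssval r end.
Definition gsrc (w : gp) : V :=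
  match w with inl (x, _) => x | inr (a, r) => s (last a (ssval r)) end.
Definition gtgt (w : gp) : V :=
  match w with inl (x, _) => x | inr (a, _) => t a end.
(* sigma/tau of permitted paths (trivial: 1_{x,e}, sigma = e, tau = -e) *)
Definition sgP (w : gp) : bool :=
  match w with inl (_, e) => e | inr (a, r) => sigma (last a (ssval r)) end.
Definition tauP (w : gp) : bool :=
  match w with inl (_, e) => ~~ e | inr (a, _) => tau a end.
(* sigma/tau of antipaths (trivial: 1'_{x,e}, sigma = tau = e) *)
Definition sgN (w : gp) : bool :=
  match w with inl (_, e) => e | inr (a, r) => sigma (last a (ssval r)) end.
Definition tauN (w : gp) : bool :=
  match w with inl (_, e) => e | inr (a, _) => tau a end.

Definition permitted (w : gp) : bool :=
  match w with
  | inl _ => true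
  | inr (a, r) => arrow_path a (ssval r) && path (fun x y => ~~ R x y) a (ssval r)
  end.
Definition antipath (w : gp) : bool :=
  match w with
  | inl _ => true
  | inr (a, r) => arrow_path a (ssval r) && path R a (ssval r)
  end.

Definition maxM (w : gp) : bool :=
  [&& permitted w,
      [forall a, ~~ ((s a == gtgt w) && (sigma a == ~~ tauP w))] &
      [forall b, ~~ ((t b == gsrc w) && (tau b == ~~ sgP w))]].
Definition maxN (w : gp) : bool :=
  [&& antipath w,
      [forall a, ~~ ((s a == gtgt w) && (sigma a == tauN w))] &
      [forall b, ~~ ((t b == gsrc w) && (tau b == sgN w))]].

Definition phi (w : gp) : gp :=
  odflt w [pick w' | maxN w' && (gtgt w' == gtgt w) && (tauN w' == ~~ tauP w)].
Definition psi (w : gp) : gp :=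
  odflt w [pick w' | maxM w' && (gsrc w' == gsrc w) && (sgP w' == ~~ sgN w)].
Definition Phi (w : gp) : gp := phi (psi w).

Definition PhiOrbits : {set {set gp}} :=
  [set [set x in orbit Phi w] | w in [set w | maxN w]].
Definition orbit_length (O : {set gp}) : nat := \sum_(w in O) size (arrs w).

Definition Cset : {set A} := [set a | ~~ [exists w, maxN w && (a \in arrs w)]].
Definition Psi (a : A) : A :=
  odflt a [pick b in Cset | (t b == s a) && (tau b == sigma a)].
Definition PsiOrbits : {set {set A}} := [set [set x in orbit Psi a] | a in Cset].

Definition fAG (p q : nat) : nat :=
  #|[set O in PhiOrbits | (#|O| == p) && (orbit_length O == q)]|
  + (p == 0) * #|[set O in PsiOrbits | #|O| == q]|.

End Gentle.

(* characteristic function [a,b] of {(a,b)} *)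
Definition chr (a b : nat) (x y : nat) : nat := ((x == a) && (y == b) : nat).

From mathcomp Require Import all_boot zify.
Set Implicit Arguments. Unset Strict Implicit. Unset Printing Implicit Defensive.

(* The shape of f says that the Psi-orbits are m' orbits of size 3 and that the
   maximal antipaths form a single Phi-orbit N with |N| = p + m' + 2 and total
   length p.  A Psi-orbit of size 3 is a 3-cycle of arrows, so deleting one
   arrow from each orbit keeps the quiver connected: |V| + m' <= |A| + 1.
   Maximal antipaths, recorded by their target and sign, and arrows, recorded
   by their source and sign, inject disjointly into V x {+1,-1}, so
   |N| + |A| <= 2|V|.  Finally the arrows outside C lie on maximal antipaths,
   so |A| <= p + 3m'.  These inequalities force |A| = p + 3m' and
   |V| = p + 2m' + 1, and the first one becomes an equality: no further arrow
   can be deleted without disconnecting the quiver.  Hence every 3-cycle is a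
   Psi-orbit, and m = m'. *)

Lemma card_bigcup_le (T I : finType) (P : pred I) (F : I -> {set T}) :
  #|\bigcup_(i | P i) F i| <= \sum_(i | P i) #|F i|.
Proof.
elim/big_rec2: _ => [|i U n _ IH]; first by rewrite cards0.
by rewrite (leq_trans (leq_card_setU _ _)) // leq_add2l.
Qed.

Lemma mem_allseq (T : finType) n (l : seq T) : size l <= n -> l \in allseq T n.
Proof.
elim: n l => [|n IH] [|a l] //= size_l.
by rewrite inE; apply/orP; right; apply: allpairs_f; rewrite ?mem_enum ?IH.
Qed.

Lemma uniq_mem_allseq (T : finType) (a : T) l : uniq (a :: l) -> l \in allseq T #|T|.-1.
Proof.
move=> /card_uniqP uniq_l; apply: mem_allseq.
by have := max_card (mem (a :: l)); rewrite uniq_l /= cardT; lia.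
Qed.

Section MaximalPaths.
Variables (T : finType) (e : rel T).

Lemma mem_path_pred x l y : path e x l -> y \in l -> exists2 w, w \in belast x l & e w y.
Proof.
elim: l x => [|a l IH] x //= /andP[e_xa e_l]; rewrite inE => /orP[/eqP->|yl].
  by exists x; rewrite ?inE ?eqxx.
by have [w wl e_wy] := IH a e_l yl; exists w; rewrite // inE wl orbT.
Qed.

Lemma maximal_path_unique x l1 l2 :
    (forall x y z, e x y -> e x z -> y = z) -> path e x l1 -> path e x l2 ->
  (forall y, ~~ e (last x l1) y) -> (forall y, ~~ e (last x l2) y) -> l1 = l2.
Proof.
move=> e_fun; elim: l1 x l2 => [|a l1 IH] x [|b l2] //=.
- by move=> _ /andP[e_xb _] /(_ b); rewrite e_xb.
- by move=> /andP[e_xa _] _ _ /(_ a); rewrite e_xa.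
move=> /andP[e_xa e_l1] /andP[e_xb e_l2] max1 max2.
have b_a := e_fun _ _ _ e_xb e_xa; subst b.
by rewrite (IH a l2).
Qed.

Lemma exists_maximal_path x0 :
    (forall x y z, e x z -> e y z -> x = y) -> (forall y, ~~ e y x0) ->
  exists l, [/\ path e x0 l, uniq (x0 :: l) & forall y, ~~ e (last x0 l) y].
Proof.
move=> e_inj x0_source.
have extend l y : path e x0 l -> uniq (x0 :: l) -> e (last x0 l) y ->
    uniq (x0 :: rcons l y).
  move=> e_l uniq_l e_y; rewrite -rcons_cons rcons_uniq uniq_l andbT.
  rewrite inE negb_or; apply/andP; split.
    by apply/eqP => y_x0; subst y; rewrite (negbTE (x0_source _)) in e_y.
  apply/negP => /(mem_path_pred e_l) [w w_l /e_inj/(_ e_y) w_last].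
  by move: uniq_l; rewrite lastI rcons_uniq -w_last w_l.
suff grow n l : #|T| - size l <= n -> path e x0 l -> uniq (x0 :: l) ->
    exists l', [/\ path e x0 l', uniq (x0 :: l') & forall y, ~~ e (last x0 l') y].
  exact: (grow _ [::]).
elim: n l => [|n IH] l size_l e_l uniq_l;
  have [y e_y|no_succ] := pickP (e (last x0 l));
  try by exists l; split=> // y; rewrite no_succ.
- exfalso; have := max_card (mem (x0 :: rcons l y)).
  rewrite (card_uniqP (extend _ _ e_l uniq_l e_y)) /= size_rcons cardT.
  by move: size_l; rewrite cardT; lia.
- apply: (IH (rcons l y)); first by rewrite size_rcons; lia.
    by rewrite rcons_path e_l.
  exact: extend.
Qed.
End MaximalPaths.

Section Connectivity.
Variables (V A : finType) (s t : A -> V).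

Definition adj_on (E : {set A}) : rel V :=
  fun x y => [exists a in E, ((s a == x) && (t a == y)) || ((s a == y) && (t a == x))].

Lemma adj_on_sym (E : {set A}) : symmetric (adj_on E).
Proof.
by move=> x y; apply/existsP/existsP => -[a /andP[aE h]]; exists a; rewrite aE orbC.
Qed.

Lemma connect_on_sym (E : {set A}) : connect_sym (adj_on E).
Proof. exact/sym_connect_sym/adj_on_sym. Qed.

Lemma adj_on_arrow (E : {set A}) a : a \in E -> adj_on E (s a) (t a).
Proof. by move=> aE; apply/existsP; exists a; rewrite aE !eqxx. Qed.

Lemma path_exit_arrow (E : {set A}) (S : {set V}) x p : path (adj_on E) x p ->
  x \in S -> last x p \notin S -> exists2 a, a \in E & (s a \in S) != (t a \in S).
Proof.
elim: p x => [|y p IH] x /=; first by move=> _ ->.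
move=> /andP[adj_xy adj_p] xS; have [yS|yNS] := boolP (y \in S); first exact: IH.
move=> _; case/existsP: adj_xy => a /andP[aE /orP[]/andP[/eqP sa /eqP ta]];
  by exists a; rewrite // sa ta xS (negbTE yNS).
Qed.

Lemma connected_card_le (E : {set A}) : 0 < #|V| -> (forall x y, connect (adj_on E) x y) ->
  #|V| <= #|E| + 1.
Proof.
move=> V_gt0 conn; have [r _] := card_gt0P V_gt0.
pose inner (S : {set V}) := [set a in E | (s a \in S) && (t a \in S)].
suff grow n : n < #|V| -> exists S : {set V}, #|S| = n.+1 /\ n <= #|inner S|.
  have [|S [_ le_S]] := grow #|V|.-1; first by rewrite prednK.
  rewrite -(prednK V_gt0) addn1 ltnS (leq_trans le_S) // subset_leq_card //.
  by apply/subsetP => a; rewrite inE => /andP[].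
elim: n => [_|n IH lt_n]; first by exists [set r]; rewrite cards1.
have [S [card_S le_S]] := IH (ltnW lt_n).
have [y yNS] : exists y, y \notin S.
  apply/existsP; apply: contraTT lt_n => /existsPn S_full.
  rewrite -leqNgt -card_S -cardsT subset_leq_card //.
  by apply/subsetP => z _; rewrite -[z \in S]negbK.
have [x xS] : exists x, x \in S by apply/card_gt0P; rewrite card_S.
have [q adj_q y_last] := connectP (conn x y); rewrite y_last in yNS.
have [a aE a_exit] := path_exit_arrow adj_q xS yNS.
have a_new : a \notin inner S.
  by apply: contra a_exit; rewrite inE => /and3P[_ -> ->].
have [v [vNS a_v]] : exists v, v \notin S /\ a \in inner (v |: S).
  move: a_exit; case sS: (s a \in S); case tS: (t a \in S) => //= _;
    [exists (t a) | exists (s a)]; by rewrite /inner !inE aE ?sS ?tS ?eqxx ?orbT.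
exists (v |: S); split; first by rewrite cardsU1 vNS card_S.
apply: leq_trans (_ : #|a |: inner S| <= _); first by rewrite cardsU1 a_new add1n ltnS.
rewrite subset_leq_card // subUset sub1set a_v andTb.
by apply/subsetP => b; rewrite !inE => /and3P[-> -> ->]; rewrite !orbT.
Qed.

Lemma connect_adj_on (E : {set A}) : (forall x y, connect (adj s t) x y) ->
    (forall a, connect (adj_on E) (s a) (t a)) ->
  forall x y, connect (adj_on E) x y.
Proof.
move=> conn bypass x y; apply: connect_sub (conn x y) => u v.
case/existsP => a /orP[]/andP[/eqP<- /eqP<-]; first exact: bypass.
by rewrite connect_on_sym.
Qed.

Lemma card_removable_le (X : {set A}) : connected_quiver s t ->
    (forall g, g \in X -> connect (adj_on (~: X)) (s g) (t g)) ->
  #|V| + #|X| <= #|A| + 1.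
Proof.
move=> [V_gt0 conn] bypass_X; have := cardsC X.
suff : #|V| <= #|~: X| + 1 by lia.
apply: connected_card_le V_gt0 _; apply: connect_adj_on conn _ => a.
have [/bypass_X //|aNX] := boolP (a \in X).
by apply/connect1/adj_on_arrow; rewrite inE.
Qed.

Lemma connect_cycle3 (E : {set A}) a b c : s a = t b -> s b = t c -> s c = t a ->
    connect (adj_on E) (s b) (t b) -> connect (adj_on E) (s c) (t c) ->
  connect (adj_on E) (s a) (t a).
Proof.
move=> sa sb sc conn_b conn_c; rewrite sa -sc.
by apply: (connect_trans (y := t c)); rewrite connect_on_sym // -sb.
Qed.
End Connectivity.

Section Invariant.
Variables (V A : finType) (s t : A -> V) (R : rel A) (sigma tau : A -> bool).

Local Notation maxN := (maxN s t R sigma tau).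
Local Notation maxM := (maxM s t R sigma tau).
Local Notation phi := (phi s t R sigma tau).
Local Notation Phi := (Phi s t R sigma tau).
Local Notation PhiOrbits := (PhiOrbits s t R sigma tau).
Local Notation Psi := (Psi s t R sigma tau).
Local Notation PsiOrbits := (PsiOrbits s t R sigma tau).
Local Notation C := (Cset s t R sigma tau).

Definition Nset : {set gp V A} := [set w | maxN w].

Lemma PhiOrbit_neq0 O : O \in PhiOrbits -> 0 < #|O|.
Proof. by case/imsetP=> w _ ->; apply/card_gt0P; exists w; rewrite inE in_orbit. Qed.

Lemma fAG0 q : fAG s t R sigma tau 0 q = #|[set O in PsiOrbits | #|O| == q]|.
Proof.
rewrite /fAG mul1n -[RHS]add0n; congr (_ + _); apply/eqP; rewrite cards_eq0.
apply/eqP/setP => O; rewrite !inE; apply/negbTE.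
by apply/andP => -[/PhiOrbit_neq0]; rewrite lt0n => /negbTE->.
Qed.

Lemma fAG_gt0 p q : 0 < p ->
  fAG s t R sigma tau p q = #|[set O in PhiOrbits | (#|O| == p) && (orbit_length O == q)]|.
Proof. by case: p => // p _; rewrite /fAG mul0n addn0. Qed.

Lemma card_notC : #|~: C| <= orbit_length Nset.
Proof.
apply: leq_trans (_ : #|\bigcup_(w in Nset) [set a | a \in arrs w]| <= _).
  apply/subset_leq_card/subsetP => a; rewrite !inE negbK => /existsP[w /andP[mw aw]].
  by apply/bigcupP; exists w; rewrite ?inE.
apply: leq_trans (card_bigcup_le _ _) _; apply: leq_sum => w _.
by rewrite cardsE card_size.
Qed.

Lemma card_C : #|C| <= \sum_(O in PsiOrbits) #|O|.
Proof.
apply: leq_trans (card_bigcup_le _ _); apply/subset_leq_card/subsetP => a aC.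
by apply/bigcupP; exists [set x in orbit Psi a]; rewrite ?inE ?in_orbit ?imset_f.
Qed.

Hypothesis sigma_sep : forall a b, a != b -> s a = s b -> sigma a != sigma b.
Hypothesis tau_sep : forall a b, a != b -> t a = t b -> tau a != tau b.
Hypothesis R_sign : forall a b, s a = t b -> R a b = (sigma a == tau b).

Lemma src_sigma_inj a b : s a = s b -> sigma a = sigma b -> a = b.
Proof.
by move=> sab; have [//|/sigma_sep/(_ sab)] := eqVneq a b => /[swap] ->; rewrite eqxx.
Qed.

Lemma tgt_tau_inj a b : t a = t b -> tau a = tau b -> a = b.
Proof.
by move=> tab; have [//|/tau_sep/(_ tab)] := eqVneq a b => /[swap] ->; rewrite eqxx.
Qed.

Lemma no_three_arrows_same_src a0 a1 a2 : a0 != a1 -> a1 != a2 -> a2 != a0 ->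
  s a0 = s a1 -> s a1 = s a2 -> False.
Proof.
move=> /sigma_sep h01 /sigma_sep h12 /sigma_sep h20 s01 s12.
move: (h01 s01) (h12 s12) (h20 (esym (etrans s01 s12))).
by case: (sigma a0); case: (sigma a1); case: (sigma a2).
Qed.

Definition anti_next a b := (t b == s a) && (tau b == sigma a).

Lemma anti_next_fun a b c : anti_next a b -> anti_next a c -> b = c.
Proof.
by move=> /andP[/eqP tb /eqP taub] /andP[/eqP tc /eqP tauc]; apply: tgt_tau_inj;
  rewrite ?tb ?tc ?taub ?tauc.
Qed.

Lemma anti_next_inj a b c : anti_next a c -> anti_next b c -> a = b.
Proof.
by move=> /andP[/eqP ta /eqP taua] /andP[/eqP tb /eqP taub]; apply: src_sigma_inj;
  rewrite -?ta -?taua -?tb -?taub.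
Qed.

Lemma antipathE a (r : rest A) :
  antipath s t R (inr (a, r)) = path anti_next a (ssval r).
Proof.
rewrite /antipath /arrow_path -path_relI; apply: eq_path => x y /=.
have [sxy|] := eqVneq (s x) (t y); last by rewrite /anti_next eq_sym => /negbTE->.
by rewrite R_sign // /anti_next sxy !eqxx eq_sym.
Qed.

Lemma exists_maxN_at v e : (forall a, ~~ ((s a == v) && (sigma a == e))) ->
  exists w, [&& maxN w, gtgt t w == v & tauN tau w == e].
Proof.
move=> v_free.
have [b /andP[/eqP tb /eqP taub]|none] := pickP (fun b => (t b == v) && (tau b == e)).
  have b_source a : ~~ anti_next a b.
    apply: contra (v_free a); rewrite /anti_next tb taub.
    by move=> /andP[/eqP-> /eqP->]; rewrite !eqxx.
  have [l [next_l uniq_l max_l]] := exists_maximal_path anti_next_inj b_source.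
  exists (inr (b, SeqSub (uniq_mem_allseq uniq_l))).
  rewrite /maxN antipathE /= tb taub !eqxx !andbT next_l /=.
  by apply/andP; split; apply/forallP; [apply: v_free | apply: max_l].
exists (inl (v, e)); rewrite /maxN /= !eqxx !andbT.
by apply/andP; split; apply/forallP => b; rewrite ?v_free ?none.
Qed.

Lemma phi_maxN w : maxM w \/ maxN w -> maxN (phi w).
Proof.
rewrite /phi; case: pickP => [w' /andP[/andP[]] // | none /=].
case=> // /and3P[_ /forallP free _].
have [w' /and3P[m' t' tau']] := exists_maxN_at free.
by move: (none w'); rewrite m' t' tau'.
Qed.

Lemma Phi_maxN w : maxN w -> maxN (Phi w).
Proof.
move=> mw; apply: phi_maxN; rewrite /psi.
by case: pickP => [w' /andP[/andP[]] | _]; [left | right].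
Qed.

Lemma maxN_inj w1 w2 : maxN w1 -> maxN w2 ->
  gtgt t w1 = gtgt t w2 -> tauN tau w1 = tauN tau w2 -> w1 = w2.
Proof.
case: w1 => [[x1 e1]|[a1 r1]]; case: w2 => [[x2 e2]|[a2 r2]] /=.
- by move=> _ _ -> ->.
- move=> /and3P[_ _ /forallP/(_ a2) no_a2] _ x1E e1E.
  by move: no_a2; rewrite x1E e1E !eqxx.
- move=> _ /and3P[_ _ /forallP/(_ a1) no_a1] x2E e2E.
  by move: no_a1; rewrite -x2E -e2E !eqxx.
move=> /and3P[anti1 _ /forallP max1] /and3P[anti2 _ /forallP max2] ta taua.
have a12 := tgt_tau_inj ta taua; subst a2.
move: anti1 anti2; rewrite !antipathE => anti1 anti2.
congr (inr (_, _)); apply: val_inj.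
apply: (maximal_path_unique anti_next_fun anti1 anti2) => y; [exact: max1 | exact: max2].
Qed.

Lemma cover_PhiOrbits : cover PhiOrbits = Nset.
Proof.
apply/setP => w; rewrite inE; apply/bigcupP/idP => [[O /imsetP[w0 mw0 ->]] | mw].
  rewrite inE /orbit => /trajectP[i _ ->]; rewrite inE in mw0.
  by elim: i => //= i IH; apply: Phi_maxN.
by exists [set x in orbit Phi w]; rewrite ?inE ?in_orbit // imset_f ?inE.
Qed.

(* The images are disjoint: a maximal antipath w leaves no arrow a with
   (s a, sigma a) = (gtgt w, tauN w). *)
Lemma card_Nset_arrows : #|Nset| + #|A| <= 2 * #|V|.
Proof.
pose tgtN w := (gtgt t w, tauN tau w); pose srcA a := (s a, sigma a).
have card_tgtN : #|tgtN @: Nset| = #|Nset|.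
  by apply: card_in_imset => w1 w2; rewrite !inE => m1 m2 [ta taua]; exact: maxN_inj.
have card_srcA : #|srcA @: [set: A]| = #|A|.
  by rewrite card_imset ?cardsT // => a b [sab sigab]; exact: src_sigma_inj.
have disj : [disjoint tgtN @: Nset & srcA @: [set: A]].
  rewrite disjoints_subset; apply/subsetP => z /imsetP[w]; rewrite inE => mw ->.
  rewrite inE; apply/imsetP => -[a _ [ta taua]].
  by move: mw => /and3P[_ /forallP/(_ a) + _]; rewrite -ta -taua !eqxx.
apply: leq_trans (_ : #|tgtN @: Nset| + #|srcA @: [set: A]| <= _).
  by rewrite card_tgtN card_srcA.
have := (leq_card_setU (tgtN @: Nset) (srcA @: [set: A])).2; rewrite disj => /eqP <-.
by rewrite (leq_trans (max_card _)) // card_prod card_bool mulnC.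
Qed.

Section TriangularOrbits.
Hypothesis PsiOrbits3 : forall O, O \in PsiOrbits -> #|O| = 3.

Definition Psi_triple x := (x, Psi x, Psi (Psi x)).
Definition Psi_arrows x := [set x; Psi x; Psi (Psi x)].

Lemma orbit_Psi x : x \in C -> orbit Psi x = [:: x; Psi x; Psi (Psi x)].
Proof.
move=> xC; have := PsiOrbits3 (imset_f (fun a => [set z in orbit Psi a]) xC).
by rewrite cardsE (card_uniqP (orbit_uniq _ _)) size_orbit /orbit => ->.
Qed.

Lemma uniq_Psi x : x \in C -> uniq [:: x; Psi x; Psi (Psi x)].
Proof. by move=> xC; rewrite -orbit_Psi ?orbit_uniq. Qed.

Lemma Psi_step x : x \in C -> [/\ Psi x \in C, t (Psi x) = s x & tau (Psi x) = sigma x].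
Proof.
move/uniq_Psi; rewrite /= inE negb_or => /andP[/andP[+ _] _].
by rewrite /Psi; case: pickP => [b /and3P[bC /eqP -> /eqP ->] | _]; rewrite ?eqxx.
Qed.

Lemma Psi_inj x y : x \in C -> y \in C -> Psi x = Psi y -> x = y.
Proof.
move=> xC yC Pxy; have [_ tx taux] := Psi_step xC; have [_ ty tauy] := Psi_step yC.
by apply: src_sigma_inj; [rewrite -tx -ty | rewrite -taux -tauy]; rewrite Pxy.
Qed.

Lemma Psi3 x : x \in C -> Psi (Psi (Psi x)) = x.
Proof.
move=> xC; have [x1C _ _] := Psi_step xC; have [x2C _ _] := Psi_step x1C.
have := looping_order Psi x; rewrite /looping -size_orbit orbit_Psi //= !inE.
case/or3P => /eqP // cyc.
- by have := uniq_Psi xC; rewrite /= (Psi_inj x2C xC cyc) !inE eqxx orbT.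
- by have := uniq_Psi x2C; rewrite /= cyc !inE eqxx.
Qed.

Lemma Psi_cycle_src x : x \in C ->
  [/\ s x = t (Psi x), s (Psi x) = t (Psi (Psi x)) & s (Psi (Psi x)) = t x].
Proof.
move=> xC; have [x1C t1 _] := Psi_step xC; have [x2C t2 _] := Psi_step x1C.
by have [_ t3 _] := Psi_step x2C; rewrite Psi3 // in t3.
Qed.

Lemma is3cycle_Psi x : x \in C -> is3cycle s t (Psi_triple x).
Proof.
move=> xC; have [e1 e2 e3] := Psi_cycle_src xC.
move: (uniq_Psi xC); rewrite /= !inE negb_or andbT => /andP[/andP[n01 n02] n12].
by rewrite n01 n12 eq_sym n02 e1 e2 e3 !eqxx.
Qed.

Lemma Psi_arrows_Psi x : x \in C -> Psi_arrows (Psi x) = Psi_arrows x.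
Proof.
move=> xC; apply/setP => z; rewrite !inE Psi3 //.
by case: (z == x); case: (z == Psi x); case: (z == Psi (Psi x)).
Qed.

Lemma PsiOrbitE x : x \in C -> [set z in orbit Psi x] = Psi_arrows x.
Proof. by move=> xC; apply/setP => z; rewrite inE (orbit_Psi xC) /Psi_arrows !inE orbA. Qed.

Lemma card_C_le : #|C| <= 3 * #|PsiOrbits|.
Proof.
apply: leq_trans card_C _; rewrite (eq_bigr (fun=> 3)) => [|O /PsiOrbits3 //].
by rewrite sum_nat_const mulnC.
Qed.

Lemma PsiOrbitP O y : O \in PsiOrbits -> y \in O -> y \in C /\ O = Psi_arrows y.
Proof.
case/imsetP => x xC ->; rewrite PsiOrbitE // => y_x.
have [x1C _ _] := Psi_step xC; have [x2C _ _] := Psi_step x1C.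
have : [|| y == x, y == Psi x | y == Psi (Psi x)] by move: y_x; rewrite !inE -orbA.
by case/or3P => /eqP ->; split; rewrite ?Psi_arrows_Psi.
Qed.

Lemma PsiOrbit_eq O1 O2 y : O1 \in PsiOrbits -> O2 \in PsiOrbits ->
  y \in O1 -> y \in O2 -> O1 = O2.
Proof. by move=> O1P O2P /(PsiOrbitP O1P)[_ ->] /(PsiOrbitP O2P)[_ ->]. Qed.

Lemma exists_PsiOrbit_reps (D : {set A}) : (forall O, O \in PsiOrbits -> ~~ (O \subset D)) ->
  exists S : {set A}, [/\ #|S| = #|PsiOrbits|, [disjoint S & D] &
    forall g, g \in S -> [/\ g \in C, Psi g \notin S & Psi (Psi g) \notin S]].
Proof.
move=> D_avoid; have [a0 _|A0] := pickP (@predT A); last first.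
  exists set0; rewrite cards0 disjoints_subset sub0set; split=> // [|g]; last by rewrite inE.
  apply/esym/eqP; rewrite -leqn0 (leq_trans (leq_imset_card _ _)) //.
  by rewrite (leq_trans (max_card _)) // eq_card0.
pose r O := odflt a0 [pick x in O :\: D].
have r_out O : O \in PsiOrbits -> r O \in O :\: D.
  move=> OP; rewrite /r; case: pickP => // none.
  by case/subsetPn: (D_avoid O OP) => x xO xD; move: (none x); rewrite inE xD xO.
have r_in O : O \in PsiOrbits -> r O \in O by move/r_out; rewrite inE => /andP[].
have r_unique O y : O \in PsiOrbits -> y \in O -> y \in r @: PsiOrbits -> y = r O.
  move=> OP yO /imsetP[O' O'P y_r].
  by rewrite y_r (PsiOrbit_eq OP O'P yO) // y_r r_in.
exists (r @: PsiOrbits); split.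
- apply: card_in_imset => O1 O2 O1P O2P rO.
  by apply: (PsiOrbit_eq O1P O2P (r_in _ O1P)); rewrite rO r_in.
- rewrite disjoints_subset; apply/subsetP => _ /imsetP[O OP ->].
  by move: (r_out O OP); rewrite !inE => /andP[].
move=> g /imsetP[O OP g_r].
have gO : g \in O by rewrite g_r r_in.
have [gC O_g] := PsiOrbitP OP gO.
have g_unique y : y \in O -> y \in r @: PsiOrbits -> y = g by rewrite g_r; exact: r_unique.
have PO : Psi g \in O by rewrite O_g !inE eqxx orbT.
have PPO : Psi (Psi g) \in O by rewrite O_g !inE eqxx !orbT.
have u := uniq_Psi gC; rewrite /= !inE negb_or andbT in u.
case/andP: u => /andP[n01 n02] _.
split=> //; apply/negP => inS.
- by move: n01; rewrite (g_unique _ PO inS) eqxx.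
- by move: n02; rewrite (g_unique _ PPO inS) eqxx.
Qed.

Lemma card_V_PsiOrbits_le : connected_quiver s t -> #|V| + #|PsiOrbits| <= #|A| + 1.
Proof.
move=> conn; have [|S [card_S _ S_reps]] := exists_PsiOrbit_reps (D := set0).
  by move=> O /PsiOrbits3 O3; rewrite subset0 -cards_eq0 O3.
rewrite -card_S; apply: card_removable_le conn _ => g /S_reps[gC PgS PPgS].
have [e1 e2 e3] := Psi_cycle_src gC.
by apply: (connect_cycle3 e1 e2 e3); apply/connect1/adj_on_arrow; rewrite inE.
Qed.

(* Otherwise a0 could be deleted as well: its endpoints stay connected through
   a1 and a2, which are not orbit representatives. *)
Lemma is3cycle_PsiOrbit a0 a1 a2 : connected_quiver s t ->
    #|A| + 1 <= #|V| + #|PsiOrbits| -> is3cycle s t (a0, a1, a2) ->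
  [set a0; a1; a2] \in PsiOrbits.
Proof.
move=> conn tight /and5P[n01 n12 n20 /eqP s01 /andP[/eqP s12 /eqP s20]].
set D := [set a0; a1; a2]; apply: contraTT tight => D_notin; rewrite -ltnNge.
have [|S [card_S disj_SD S_reps]] := exists_PsiOrbit_reps (D := D).
  move=> O OP; apply: contra D_notin => OD; suff <- : O = D by [].
  apply/eqP; rewrite eqEcard OD (PsiOrbits3 OP) /D -setUA cardsU1 cards2 !inE.
  by rewrite negb_or n01 eq_sym n20 n12.
have notS a : a \in D -> a \notin S.
  by move=> aD; apply: contraTN disj_SD => aS; apply/pred0Pn; exists a; rewrite /= aS.
have a0_bypass : connect (adj_on s t (~: (a0 |: S))) (s a0) (t a0).
  have [a1D a2D] : a1 \in D /\ a2 \in D by rewrite /D !inE !eqxx !orbT.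
  apply: (connect_cycle3 s01 s12 s20); apply/connect1/adj_on_arrow; rewrite !inE negb_or.
    by rewrite eq_sym n01 notS.
  by rewrite n20 notS.
have bypass a : a \notin S -> connect (adj_on s t (~: (a0 |: S))) (s a) (t a).
  move=> aNS; have [->|a_a0] := eqVneq a a0; first exact: a0_bypass.
  by apply/connect1/adj_on_arrow; rewrite !inE negb_or a_a0.
have a0NS : a0 \notin S by apply: notS; rewrite /D !inE eqxx.
suff : #|V| + #|a0 |: S| <= #|A| + 1 by rewrite cardsU1 a0NS card_S add1n addnS.
apply: card_removable_le conn _ => g; rewrite !inE => /orP[/eqP-> //|gS].
have [gC PgS PPgS] := S_reps g gS; have [e1 e2 e3] := Psi_cycle_src gC.
by apply: (connect_cycle3 e1 e2 e3); apply: bypass.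
Qed.

Lemma is3cycle_Psi_triple a0 a1 a2 : connected_quiver s t ->
    #|A| + 1 <= #|V| + #|PsiOrbits| -> is3cycle s t (a0, a1, a2) ->
  a0 \in C /\ (a0, a1, a2) = Psi_triple a0.
Proof.
move=> conn tight c3; have DP := is3cycle_PsiOrbit conn tight c3.
move: c3 => /and5P[n01 n12 n20 /eqP s01 /andP[/eqP s12 /eqP s20]].
have [a0C D_a0] : a0 \in C /\ [set a0; a1; a2] = Psi_arrows a0.
  by apply: PsiOrbitP DP _; rewrite !inE eqxx.
split=> //; have [a1C t1 _] := Psi_step a0C; have [_ t2 _] := Psi_step a1C.
have u := uniq_Psi a0C.
have P_D : Psi a0 \in [set a0; a1; a2] by rewrite D_a0 !inE eqxx orbT.
have PP_D : Psi (Psi a0) \in [set a0; a1; a2] by rewrite D_a0 !inE eqxx !orbT.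
rewrite /Psi_triple; move: (Psi a0) (Psi (Psi a0)) t1 t2 u P_D PP_D {a1C D_a0}.
move=> b1 b2 t1 t2 u; rewrite !inE -!orbA.
case/or3P => /eqP b1E; case/or3P => /eqP b2E; subst b1 b2 => //;
  try by move: u; rewrite /= !inE !eqxx ?orbT ?andbF.
(* The reversed orientation would make all three arrows start at one vertex. *)
exfalso; apply: (no_three_arrows_same_src n01 n12 n20); first by rewrite s12 t1.
by rewrite s12 t1 s01 t2.
Qed.

Lemma rotclass_Psi_triple x : x \in C ->
  rotclass (Psi_triple x) = Psi_triple @: Psi_arrows x.
Proof.
by move=> xC; rewrite /Psi_arrows !imsetU !imset_set1 /rotclass /Psi_triple /= Psi3.
Qed.

Lemma n3cycles_PsiOrbits : connected_quiver s t ->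
  #|A| + 1 <= #|V| + #|PsiOrbits| -> n3cycles s t = #|PsiOrbits|.
Proof.
move=> conn tight; rewrite /n3cycles.
have -> : [set rotclass c | c in [set c | is3cycle s t c]] =
          [set Psi_triple @: O | O : {set A} in PsiOrbits].
  apply/setP => Q; apply/imsetP/imsetP => -[c].
    rewrite inE; case: c => [[a0 a1] a2] c3 ->.
    have [a0C ->] := is3cycle_Psi_triple conn tight c3.
    exists (Psi_arrows a0); last exact: rotclass_Psi_triple.
    by rewrite -PsiOrbitE // imset_f.
  move=> /imsetP[x xC ->] ->; exists (Psi_triple x); first by rewrite inE is3cycle_Psi.
  by rewrite PsiOrbitE // rotclass_Psi_triple.
by apply: card_in_imset => O1 O2 _ _; apply: imset_inj => x y [].
Qed.
End TriangularOrbits.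
End Invariant.

Section InvariantShape.
Variables (V A : finType) (s t : A -> V) (R : rel A) (sigma tau : A -> bool) (m' p : nat).
Hypothesis f_shape : forall x y,
  fAG s t R sigma tau x y = m' * chr 0 3 x y + chr (p + m' + 2) p x y.

Local Notation PhiOrbits := (PhiOrbits s t R sigma tau).
Local Notation PsiOrbits := (PsiOrbits s t R sigma tau).

Lemma shape_PsiOrbits3 O : O \in PsiOrbits -> #|O| = 3.
Proof.
move=> OP; apply/eqP; apply: contraTT isT => O3.
have : 0 < #|[set O' in PsiOrbits | #|O'| == #|O|]|.
  by apply/card_gt0P; exists O; rewrite inE OP eqxx.
by rewrite -fAG0 f_shape /chr addn2 (negbTE O3) /= muln0.
Qed.

Lemma shape_card_PsiOrbits : #|PsiOrbits| = m'.
Proof.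
have := f_shape 0 3; rewrite fAG0 /chr addn2 /= muln1 addn0 => <-.
by apply: eq_card => O; rewrite inE; case OP: (O \in _); rewrite // shape_PsiOrbits3.
Qed.

Lemma shape_PhiOrbits : exists Z,
  [/\ PhiOrbits = [set Z], #|Z| = p + m' + 2 & orbit_length Z = p].
Proof.
have Phi_shape O : O \in PhiOrbits -> (#|O| == p + m' + 2) && (orbit_length O == p).
  move=> OP; apply: contraTT isT => /negbTE O_shape.
  have : 0 < #|[set O' in PhiOrbits | (#|O'| == #|O|) && (orbit_length O' == orbit_length O)]|.
    by apply/card_gt0P; exists O; rewrite inE OP !eqxx.
  rewrite -fAG_gt0 ?(PhiOrbit_neq0 OP) // f_shape /chr O_shape.
  by rewrite eqn0Ngt (PhiOrbit_neq0 OP) /= muln0.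
have : #|PhiOrbits| == 1.
  have := f_shape (p + m' + 2) p; rewrite fAG_gt0 ?addn2 // /chr !eqxx /= muln0 add0n -addn2.
  move=> <-; apply/eqP/eq_card => O; rewrite inE.
  by case OP: (O \in _); rewrite // Phi_shape.
case/cards1P => Z PhiZ; exists Z.
have /Phi_shape/andP[/eqP card_Z /eqP len_Z] : Z \in PhiOrbits by rewrite PhiZ set11.
by [].
Qed.
End InvariantShape.

Theorem proposition8p1 (V A : finType) (s t : A -> V) (R : rel A)
    (sigma tau : A -> bool) (m' p : nat) :
  gentle s t R ->
  sign_ok s t R sigma tau ->
  (forall x y, fAG s t R sigma tau x y = m' * chr 0 3 x y + chr (p + m' + 2) p x y) ->
  let m := n3cycles s t in
  (2 * m + 1 <= #|V|)%N /\
  (forall x y, fAG s t R sigma tau x y =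
               m * chr 0 3 x y + chr (#|V| + 1 - m) (#|V| - 1 - 2 * m) x y).
Proof.
move=> [_ [conn _ _ _ _]] [sigma_sep tau_sep R_sign] f_shape m.
have PsiOrbits3 := shape_PsiOrbits3 f_shape.
have card_Psi := shape_card_PsiOrbits f_shape.
have [Z [PhiZ card_Z len_Z]] := shape_PhiOrbits f_shape.
have NsetZ : Nset s t R sigma tau = Z by rewrite -cover_PhiOrbits // PhiZ cover1.
have le_N := card_Nset_arrows sigma_sep tau_sep R_sign.
have le_notC := card_notC s t R sigma tau.
have le_C := card_C_le PsiOrbits3.
have le_V := card_V_PsiOrbits_le sigma_sep PsiOrbits3 conn.
have card_A := cardsC (Cset s t R sigma tau).
rewrite NsetZ card_Z in le_N; rewrite NsetZ len_Z in le_notC; rewrite card_Psi in le_C le_V.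
have tight : #|A| + 1 <= #|V| + #|PsiOrbits s t R sigma tau| by rewrite card_Psi; lia.
rewrite /m (n3cycles_PsiOrbits sigma_sep PsiOrbits3 conn tight) card_Psi.
split; first lia.
by move=> x y; rewrite f_shape; congr (_ + chr _ _ x y); lia.
Qed.
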